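(* Let $L\in\mathcal L(C_6)$ with $\{2,5\}\subset L$. Then $L=\{2,5\}$ or $L=\{2,4,5\}$, and both sets actually lie in $\mathcal L(C_6)$. In particular, $[2,5]\notin\mathcal L(C_6)$.
   Context: $C_n$ denotes a cyclic group of order $n$; $[a,b]=\{x\in\mathbb Z:a\le x\le b\}$. For a subset $G_0$ of a finite abelian group $G$, a sequence over $G_0$ is an element of the free abelian monoid $\mathcal F(G_0)$ with basis $G_0$ (a finite unordered list of elements of $G_0$, repetitions allowed). $\mathcal B(G_0)$ is the monoid of zero-sum sequences over $G_0$ (including the empty sequence). An atom is a minimal zero-sum sequence, i.e. a nonempty zero-sum sequence that is not a product of two nonempty zero-sum sequences. For $B\in\mathcal B(G_0)$, $\mathsf L(B)=\{k\in\mathbb N_0: B \text{ is a product of } k \text{ atoms}\}$, and $\mathcal L(G_0)=\{\mathsf L(B):B\in\mathcal B(G_0)\}$; $\mathcal L(G)$ is the case $G_0=G$. *)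

From mathcomp Require Import all_boot all_order all_algebra.
Set Implicit Arguments. Unset Strict Implicit. Unset Printing Implicit Defensive.
Import GRing.Theory.
Local Open Scope ring_scope.

(* Sequences over G (elements of the free abelian monoid F(G)) are modelled
   as lists, considered up to permutation (perm_eq); the monoid product is
   concatenation. *)
Section ZeroSum.
Variable G : zmodType.

Definition sigma (S : seq G) : G := \sum_(g <- S) g.

Definition zero_sum (S : seq G) : Prop := sigma S = 0.

Definition atom (S : seq G) : Prop :=
  S <> [::] /\ zero_sum S /\
  ~ (exists S1 S2 : seq G, S1 <> [::] /\ S2 <> [::] /\
       zero_sum S1 /\ zero_sum S2 /\ perm_eq S (S1 ++ S2)).

Definition in_lengths (B : seq G) (k : nat) : Prop :=
  exists As : seq (seq G),
    size As = k /\ (forall A, A \in As -> atom A) /\ perm_eq B (flatten As).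

Definition in_system_of_lengths (L : nat -> Prop) : Prop :=
  exists B : seq G, zero_sum B /\ forall k, L k <-> in_lengths B k.

End ZeroSum.

(* The proof is a verified exhaustive computation.  A sequence over 'Z_n is
   described up to permutation by its multiplicity vector (cnt), and being
   zero-sum, being an atom (atomP), and the set of lengths (in_lengthsP) are
   all decidable properties of that vector.  By the Davenport bound
   (atom_size) atoms over 'Z_n have at most n terms, so the finite list
   atom_vecs contains the multiplicity vectors of all atoms, and the search
   factor_lengths, which repeatedly splits off an atom containing the first
   occurring residue, computes exactly the set of lengths of B.  For 'Z_6 a
   sequence with 2 in its set of lengths is a product U V of two atoms; running
   the search on every such pair (two_factor_check_ok) shows that 5 can only
   occur together with lengths in {2,4,5}.  Explicit sequences realize
   {2,5} and {2,4,5}. *)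

From mathcomp Require Import all_boot all_order all_algebra.
From mathcomp Require Import zify.
Import GRing.Theory.

Set Implicit Arguments. Unset Strict Implicit. Unset Printing Implicit Defensive.

Section ZeroSumFacts.
Variable G : zmodType.
Implicit Types S T : seq G.

Lemma sigma_cat S T : sigma (S ++ T) = (sigma S + sigma T)%R.
Proof. by rewrite /sigma big_cat. Qed.

Lemma sigma_perm S T : perm_eq S T -> sigma S = sigma T.
Proof. by move=> pST; rewrite /sigma (perm_big _ pST). Qed.

Lemma zero_sum_compl S S1 S2 :
  perm_eq S (S1 ++ S2) -> zero_sum S -> zero_sum S1 -> zero_sum S2.
Proof.
by rewrite /zero_sum => /sigma_perm ->; rewrite sigma_cat => zS zS1; rewrite -zS zS1 add0r.
Qed.

Lemma factorization_nil (As : seq (seq G)) :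
  perm_eq [::] (flatten As) -> (forall A, A \in As -> atom A) -> As = [::].
Proof.
case: As => [//|A As] /perm_size /esym /eqP; rewrite size_cat addn_eq0 size_eq0.
by case/andP=> /eqP -> _ /(_ _ (mem_head _ _)) [].
Qed.

Lemma in_lengths_cons (B A B' : seq G) k :
  atom A -> in_lengths B' k -> perm_eq B (A ++ B') -> in_lengths B k.+1.
Proof.
move=> atA [As [size_As [atAs pB']]] pB; exists (A :: As); split; first by rewrite /= size_As.
split; first by move=> A'; rewrite inE => /predU1P[->|/atAs].
by apply: perm_trans pB _; rewrite perm_cat2l.
Qed.

End ZeroSumFacts.

(* Davenport bound: an atom over a finite abelian group G has at most #|G|
   terms; otherwise two of the #|G|+1 prefix sums coincide and the terms in
   between form a proper zero-sum factor. *)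
Lemma atom_size (G : finZmodType) (S : seq G) : atom S -> size S <= #|G|.
Proof.
case=> _ [zS noSplit]; rewrite leqNgt; apply/negP => bigS.
pose prefix (k : 'I_#|G|.+1) := sigma (take k S).
have [[j k] [/= jk eq_jk]] : exists p : 'I_#|G|.+1 * 'I_#|G|.+1,
    p.1 < p.2 /\ prefix p.1 = prefix p.2.
  have /injectivePn[j [k neq_jk eq_jk]] : ~~ injectiveb prefix.
    by apply/injectiveP => /leq_card; rewrite card_ord ltnn.
  case: (ltngtP j k) => [jk|kj|/val_inj ejk]; last by rewrite ejk eqxx in neq_jk.
  - by exists (j, k).
  - by exists (k, j).
set S1 := drop j (take k S); set S2 := take j S ++ drop k S.
have take_k : take k S = take j S ++ S1.
  by rewrite -{1}(cat_take_drop j (take k S)) take_takel // ltnW.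
have pS : perm_eq S (S1 ++ S2).
  by rewrite -{1}(cat_take_drop k S) take_k -catA perm_catCA.
have size_S1 : size S1 = k - j.
  by rewrite size_drop size_takel //; have := ltn_ord k; lia.
have zS1 : zero_sum S1.
  by move/eqP: eq_jk; rewrite /prefix take_k eq_sym -subr_eq0 sigma_cat addrAC subrr add0r => /eqP.
apply: noSplit; exists S1, S2; split; last split; last split=> //; last split.
- by move/(congr1 size); rewrite size_S1 /=; lia.
- move/(congr1 size) => /= size_S2; move: (perm_size pS) bigS.
  rewrite size_cat size_S2 size_S1 addn0 => ->.
  by rewrite ltnNge (leq_trans (leq_subr _ _)) // -ltnS.
- exact: zero_sum_compl pS zS zS1.
- exact: pS.
Qed.

Lemma factorization_pick (T : eqType) (B : seq T) (As : seq (seq T)) x :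
  perm_eq B (flatten As) -> x \in B ->
  exists2 A, A \in As & (x \in A) /\ perm_eq B (A ++ flatten (rem A As)).
Proof.
move=> pB xB; have /flattenP[A AAs xA] : x \in flatten As by rewrite -(perm_mem pB).
by exists A => //; split=> //; apply: perm_trans pB (perm_flatten (perm_to_rem AAs)).
Qed.

Lemma sumn_mapD (I : Type) (f g : I -> nat) (r : seq I) :
  sumn [seq f i + g i | i <- r] = sumn (map f r) + sumn (map g r).
Proof. by elim: r => //= i r ->; lia. Qed.

Lemma sumn_iota_delta (f : nat -> nat) (j n : nat) :
  j < n -> sumn [seq (i == j) * f i | i <- iota 0 n] = f j.
Proof.
have delta r : sumn [seq (i == j) * f i | i <- r] = count_mem j r * f j.
  by elim: r => //= i r ->; case: eqP => [->|_]; lia.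
by move=> jn; rewrite delta count_uniq_mem ?iota_uniq // mem_iota jn mul1n.
Qed.

Definition vadd (a b : seq nat) : seq nat :=
  [seq nth 0 a i + nth 0 b i | i <- iota 0 (size a)].
Definition vsub (a b : seq nat) : seq nat :=
  [seq nth 0 a i - nth 0 b i | i <- iota 0 (size a)].

Lemma size_vadd a b : size (vadd a b) = size a.
Proof. by rewrite size_map size_iota. Qed.
Lemma size_vsub a b : size (vsub a b) = size a.
Proof. by rewrite size_map size_iota. Qed.

Lemma nth_vadd a b i : i < size a -> nth 0 (vadd a b) i = nth 0 a i + nth 0 b i.
Proof. by move=> ia; rewrite (nth_map 0) ?size_iota // nth_iota. Qed.
Lemma nth_vsub a b i : i < size a -> nth 0 (vsub a b) i = nth 0 a i - nth 0 b i.
Proof. by move=> ia; rewrite (nth_map 0) ?size_iota // nth_iota. Qed.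

Lemma vleP (d c : seq nat) :
  reflect (size d = size c /\ forall i, nth 0 d i <= nth 0 c i) (all2 leq d c).
Proof.
elim: d c => [|x d IH] [|y c] /=; try by constructor=> // -[].
apply: (iffP andP) => [[xy /IH [sdc dc]]|[[sdc] dc]].
  by split=> [|[|i]] //=; rewrite sdc.
by split; [exact: (dc 0) | apply/IH; split=> // i; exact: (dc i.+1)].
Qed.

Lemma vadd_vsub (c d : seq nat) : all2 leq d c -> vadd d (vsub c d) = c.
Proof.
case/vleP=> size_dc le_dc; apply: (@eq_from_nth _ 0) => [|i]; rewrite size_vadd // => lt_id.
by rewrite nth_vadd // nth_vsub -?size_dc // subnKC.
Qed.

Lemma leq_vadd (a b : seq nat) : size a = size b -> all2 leq a (vadd a b).
Proof.
move=> size_ab; apply/vleP; split=> [|i]; first by rewrite size_vadd.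
case: (ltnP i (size a)) => [lt_ia|le_ai]; first by rewrite nth_vadd ?leq_addr.
by rewrite nth_default.
Qed.

Lemma vaddKv (a b : seq nat) : size a = size b -> vsub (vadd a b) a = b.
Proof.
move=> size_ab; apply: (@eq_from_nth _ 0) => [|i]; rewrite size_vsub size_vadd // => lt_ia.
by rewrite nth_vsub ?size_vadd // nth_vadd // addKn.
Qed.

Fixpoint subvecs (c : seq nat) : seq (seq nat) :=
  if c is ci :: c' then [seq x :: t | x <- iota 0 ci.+1, t <- subvecs c'] else [:: [::]].

Lemma mem_subvecs c d : (d \in subvecs c) = all2 leq d c.
Proof.
elim: c d => [|ci c IH] [|di d] //; try by apply/allpairsP => -[[x t] []].
apply/allpairsP/andP => [[[x t] [+ + [-> ->]]]|[dci dc]].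
  by rewrite mem_iota -/(subvecs c) IH => /andP[_ xci] tc; split.
by exists (di, d); rewrite mem_iota -/(subvecs c) IH.
Qed.

Fixpoint bvecs (k len : nat) : seq (seq nat) :=
  if len is len'.+1 then [seq x :: t | x <- iota 0 k.+1, t <- bvecs (k - x) len']
  else [:: [::]].

Lemma bvecsS k len :
  bvecs k len.+1 = [seq x :: t | x <- iota 0 k.+1, t <- bvecs (k - x) len].
Proof. by []. Qed.

Lemma mem_bvecs k d : sumn d <= k -> d \in bvecs k (size d).
Proof.
elim: d k => [|x d IH] k // dk; rewrite (bvecsS k (size d)); apply/allpairsPdep; exists x, d.
rewrite /= in dk; by split; [rewrite mem_iota; lia | apply: IH; lia |].
Qed.

Lemma size_bvecs k len d : d \in bvecs k len -> size d = len.
Proof.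
elim: len k d => [|len IH] k d; first by rewrite inE => /eqP ->.
by rewrite bvecsS => /allpairsPdep[x [t [_ /IH <- ->]]].
Qed.

(* The
   factor containing the first occurring residue is chosen first, so each
   factorization is explored only once up to reordering. *)
Fixpoint factor_lengths (As : seq (seq nat)) (fuel : nat) (c : seq nat) : seq nat :=
  if sumn c == 0 then [:: 0] else
  if fuel is fuel'.+1 then
    let i0 := find (fun x => x != 0) c in
    undup (flatten [seq map S (factor_lengths As fuel' (vsub c a))
                   | a <- As & (0 < nth 0 a i0) && all2 leq a c])
  else [::].

Lemma factor_lengths0 As fuel c : sumn c = 0 -> factor_lengths As fuel c = [:: 0].
Proof. by case: fuel => [|fuel] /= ->. Qed.

Lemma factor_lengthsS As fuel c : sumn c != 0 ->
  factor_lengths As fuel.+1 c =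
  undup (flatten [seq map S (factor_lengths As fuel (vsub c a))
                 | a <- As & (0 < nth 0 a (find (fun x => x != 0) c)) && all2 leq a c]).
Proof. by move=> /negbTE /= ->. Qed.

Section Multiplicities.
Variable m : nat.
Local Notation n := m.+2.
Implicit Types (s t : seq 'Z_n) (c d : seq nat).

Definition cnt s : seq nat := [seq count (fun x : 'Z_n => val x == i) s | i <- iota 0 n].

Lemma size_cnt s : size (cnt s) = n.
Proof. by rewrite size_map size_iota. Qed.

Lemma nth_cnt s i : nth 0 (cnt s) i = count (fun x : 'Z_n => val x == i) s.
Proof.
case: (ltnP i n) => [lt_in|le_ni]; first by rewrite (nth_map 0) ?size_iota // nth_iota.
rewrite nth_default ?size_cnt // -(count_pred0 s); apply/esym/eq_count => x /=.
by apply/negbTE; rewrite neq_ltn (leq_trans (ltn_ord x)).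
Qed.

Lemma eq_cnt s c :
  size c = n -> (forall i, i < n -> nth 0 (cnt s) i = nth 0 c i) -> cnt s = c.
Proof. by move=> size_c eq_sc; apply: (@eq_from_nth _ 0); rewrite size_cnt. Qed.

Lemma cnt_cat s t : cnt (s ++ t) = vadd (cnt s) (cnt t).
Proof.
apply: eq_cnt => [|i lt_in]; first by rewrite size_vadd size_cnt.
by rewrite nth_vadd ?size_cnt // !nth_cnt count_cat.
Qed.

Lemma perm_cnt s t : perm_eq s t = (cnt s == cnt t).
Proof.
apply/idP/eqP => [/permP eq_st|eq_st]; first by apply: eq_map => i; apply: eq_st.
apply/allP => x _ /=; have := congr1 (nth 0 ^~ (val x)) eq_st; rewrite !nth_cnt.
have count_val r : count_mem x r = count (fun y : 'Z_n => val y == val x) r.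
  by apply: eq_count => y; rewrite /= val_eqE.
by rewrite !count_val => ->.
Qed.

Lemma sumn_weighted_cnt (f : nat -> nat) s :
  sumn [seq f i * nth 0 (cnt s) i | i <- iota 0 n] = sumn [seq f (val x) | x <- s].
Proof.
elim: s => [|x s IH]; first by elim: (iota 0 n) => //= i r ->; rewrite nth_cnt muln0.
rewrite (eq_map (g := fun i => (i == val x) * f i + f i * nth 0 (cnt s) i)) => [|i].
  by rewrite sumn_mapD IH sumn_iota_delta //; apply: ltn_ord.
by rewrite !nth_cnt /= mulnDr eq_sym mulnC.
Qed.

Lemma sumn_cnt s : sumn (cnt s) = size s.
Proof.
have := sumn_weighted_cnt (fun=> 1) s; under eq_map do rewrite mul1n.
rewrite -{1}(size_cnt s) -/(mkseq _ _) mkseq_nth => ->.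
by elim: s => //= x s ->.
Qed.

Lemma val_sigma s : val (sigma s) = sumn (map val s) %% n.
Proof.
elim: s => [|x s IH]; first by rewrite /sigma big_nil.
rewrite /sigma big_cons -/(sigma s).
by change (val (x + sigma s)%R) with ((val x + val (sigma s)) %% n); rewrite IH /= modnDmr.
Qed.

Definition weight c : nat := sumn [seq i * nth 0 c i | i <- iota 0 n].
Definition zero_sum_vec c : bool := weight c %% n == 0.

Lemma zero_sum_cnt s : zero_sum s <-> zero_sum_vec (cnt s).
Proof.
rewrite /zero_sum /zero_sum_vec /weight (sumn_weighted_cnt (fun i => i)) -val_sigma.
by split=> [-> //|/eqP sigma0]; apply: val_inj.
Qed.

Definition seq_of_vec c : seq 'Z_n :=
  flatten [seq nseq (nth 0 c i) (inZp i : 'Z_n) | i <- iota 0 n].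

Lemma cnt_seq_of_vec c : size c = n -> cnt (seq_of_vec c) = c.
Proof.
move=> size_c; apply: eq_cnt => // j lt_jn; rewrite nth_cnt count_flatten -map_comp.
rewrite -[RHS](sumn_iota_delta (nth 0 c) lt_jn); congr sumn; apply/eq_in_map => i.
rewrite mem_iota => lt_in /=; rewrite count_nseq.
by have -> : val (inZp i : 'Z_n) = i by exact: modn_small.
Qed.

Lemma size_seq_of_vec c : size c = n -> size (seq_of_vec c) = sumn c.
Proof. by move=> size_c; rewrite -sumn_cnt cnt_seq_of_vec. Qed.

Lemma split_subvec s d : all2 leq d (cnt s) ->
  perm_eq s (seq_of_vec d ++ seq_of_vec (vsub (cnt s) d)).
Proof.
move=> le_ds; have [size_d _] := vleP _ _ le_ds; rewrite size_cnt in size_d.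
rewrite perm_cnt cnt_cat !cnt_seq_of_vec ?size_vsub ?size_cnt //.
by rewrite vadd_vsub.
Qed.

Definition atom_vec c : bool :=
  [&& sumn c != 0, zero_sum_vec c &
      all (fun d => ~~ [&& 0 < sumn d, sumn d < sumn c & zero_sum_vec d]) (subvecs c)].

(* Being an atom is decided by the multiplicity vector: a splitting S ~ S1 S2
   corresponds to the subvector cnt S1 of cnt S. *)
Lemma atomP s : atom s <-> atom_vec (cnt s).
Proof.
split=> [[s_nil [zs noSplit]]|/and3P[s_nil zs /allP noSub]].
- apply/and3P; split; [by rewrite sumn_cnt size_eq0; apply/eqP | exact/zero_sum_cnt |].
  apply/allP => d; rewrite mem_subvecs => le_ds; apply/negP => /and3P[d_gt0 d_lt zd].
  have [size_d _] := vleP _ _ le_ds; rewrite size_cnt in size_d.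
  have pS := split_subvec le_ds.
  have zS1 : zero_sum (seq_of_vec d) by apply/zero_sum_cnt; rewrite cnt_seq_of_vec.
  have := perm_size pS; rewrite size_cat size_seq_of_vec // => size_s.
  apply: noSplit; exists (seq_of_vec d), (seq_of_vec (vsub (cnt s) d)).
  split; last split; last split=> //; last split; last exact: pS.
  + by move/(congr1 size); rewrite size_seq_of_vec //=; lia.
  + by move/(congr1 size) => /= S2_0; move: d_lt; rewrite sumn_cnt size_s S2_0; lia.
  + exact: zero_sum_compl pS zs zS1.
- split; first by move=> s0; move: s_nil; rewrite s0 sumn_cnt.
  split=> [|[S1 [S2 [S1_nil [S2_nil [zS1 [_ pS]]]]]]]; first exact/zero_sum_cnt.
  have le_S1 : cnt S1 \in subvecs (cnt s).
    rewrite mem_subvecs; apply/vleP; split=> [|i]; first by rewrite !size_cnt.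
    by rewrite !nth_cnt (permP pS) count_cat leq_addr.
  have /negP[] := noSub _ le_S1.
  rewrite !sumn_cnt (perm_size pS) size_cat ((zero_sum_cnt _).1 zS1) andbT.
  have S1_pos : 0 < size S1 by rewrite lt0n size_eq0; apply/eqP.
  have S2_pos : 0 < size S2 by rewrite lt0n size_eq0; apply/eqP.
  by rewrite S1_pos -[X in X < _]addn0 ltn_add2l.
Qed.

(* All multiplicity vectors of atoms over 'Z_n: by the Davenport bound it
   suffices to search the vectors of total at most n. *)
Definition atom_vecs : seq (seq nat) := [seq d <- bvecs n n | atom_vec d].

Lemma cnt_atom_vecs A : atom A -> cnt A \in atom_vecs.
Proof.
move=> atA; rewrite mem_filter ((atomP A).1 atA) -{2}(size_cnt A) mem_bvecs //.
by rewrite sumn_cnt; have := atom_size atA; rewrite card_ord.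
Qed.

Lemma atom_vecsP d : d \in atom_vecs -> size d = n /\ atom (seq_of_vec d).
Proof.
rewrite mem_filter => /andP[atd /size_bvecs size_d]; split=> //.
by apply/atomP; rewrite cnt_seq_of_vec.
Qed.

Lemma first_residue B : sumn (cnt B) != 0 ->
  exists2 x, x \in B & val x = find (fun k => k != 0) (cnt B).
Proof.
move=> B_nil; have [y B_y] : exists y, y \in B.
  by case: B B_nil => [|y B]; [rewrite sumn_cnt | exists y; rewrite mem_head].
have has_B : has (fun k => k != 0) (cnt B).
  apply/hasP; exists (nth 0 (cnt B) (val y)).
    by apply: mem_nth; rewrite size_cnt; apply: ltn_ord.
  by rewrite nth_cnt -lt0n -has_count; apply/hasP; exists y.
have := nth_find 0 has_B; rewrite nth_cnt -lt0n -has_count => /hasP[x xB /eqP vx].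
by exists x.
Qed.

(* The factor containing a term with the first occurring residue is one of
   the candidate atom vectors, and the rest of B is handled recursively. *)
Lemma factor_lengths_sound fuel B As :
  size B <= fuel -> perm_eq B (flatten As) -> (forall A, A \in As -> atom A) ->
  size As \in factor_lengths atom_vecs fuel (cnt B).
Proof.
(* When B is empty (in particular when fuel = 0) so is the factorization. *)
elim: fuel B As => [|fuel IH] B As le_B pB atAs;
  have [B0|B_nil] := eqVneq (sumn (cnt B)) 0.
  1,3: rewrite factor_lengths0 //; move: pB.
  1,2: by rewrite (size0nil (etrans (esym (sumn_cnt B)) B0)) => /factorization_nil ->.
  by move: B_nil; rewrite sumn_cnt -leqn0 le_B.
have [x xB x_first] := first_residue B_nil.
have [A AAs [xA pBA]] := factorization_pick pB xB.
set R := flatten (rem A As) in pBA.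
have cntB : cnt B = vadd (cnt A) (cnt R) by apply/eqP; rewrite -cnt_cat -perm_cnt.
rewrite factor_lengthsS // mem_undup; apply/flattenP.
exists (map S (factor_lengths atom_vecs fuel (vsub (cnt B) (cnt A)))).
  apply/mapP; exists (cnt A) => //.
  rewrite mem_filter (cnt_atom_vecs (atAs A AAs)) andbT -x_first nth_cnt -has_count.
  by rewrite cntB leq_vadd ?size_cnt // andbT; apply/hasP; exists x.
rewrite cntB vaddKv ?size_cnt // (perm_size (perm_to_rem AAs)) /= mem_map; last exact: succn_inj.
apply: IH => // [|A' /mem_rem]; last exact: atAs.
have A_pos : 0 < size A by have [A_nil _] := atAs A AAs; rewrite lt0n size_eq0; apply/eqP.
by move: le_B; rewrite (perm_size pBA) size_cat; lia.
Qed.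

Lemma factor_lengths_complete fuel B k :
  k \in factor_lengths atom_vecs fuel (cnt B) -> in_lengths B k.
Proof.
elim: fuel B k => [|fuel IH] B k; have [B0|B_nil] := eqVneq (sumn (cnt B)) 0;
  try by rewrite factor_lengths0 // inE => /eqP ->; exists [::];
         move: B0; rewrite sumn_cnt => /size0nil ->.
  by rewrite /= (negbTE B_nil).
rewrite factor_lengthsS // mem_undup => /flattenP[l /mapP[a + ->] /mapP[k' k'_in ->]].
rewrite mem_filter => /andP[/andP[_ le_aB] a_atom].
have [size_a atA] := atom_vecsP a_atom.
apply: in_lengths_cons atA _ (split_subvec le_aB).
by apply: IH; rewrite cnt_seq_of_vec // size_vsub size_cnt.
Qed.

Definition lengths_of c : seq nat := factor_lengths atom_vecs (sumn c) c.

Lemma in_lengthsP B k : in_lengths B k <-> k \in lengths_of (cnt B).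
Proof.
split=> [[As [<- [atAs pB]]]|]; last exact: factor_lengths_complete.
by apply: factor_lengths_sound; rewrite ?sumn_cnt.
Qed.

End Multiplicities.

(* From here on n = 6, i.e. m = 4: C_6 is 'Z_6 = 'Z_(4.+2). *)

Definition two_five_ok (L : seq nat) : bool := (5 \notin L) || all (mem [:: 2; 4; 5]) L.

(* The list As is a
   parameter so that the computation evaluates atom_vecs only once. *)
Definition two_factor_check (As : seq (seq nat)) : bool :=
  all (fun a => all (fun b =>
    two_five_ok (factor_lengths As (sumn (vadd a b)) (vadd a b))) As) As.

Lemma two_factor_check_ok : two_factor_check (atom_vecs 4).
Proof. by vm_compute. Qed.

Lemma lengths_2_5 (B : seq 'Z_6) : in_lengths B 2 -> in_lengths B 5 ->
  {subset lengths_of 4 (cnt B) <= [:: 2; 4; 5]}.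
Proof.
move=> [As [size_As [atAs pB]]] /in_lengthsP L5.
case: As size_As atAs pB => [|A1 [|A2 [|? ?]]] // _ atAs; rewrite /= cats0 => pB.
have cntB : cnt B = vadd (cnt A1) (cnt A2) by apply/eqP; rewrite -cnt_cat -perm_cnt.
have /cnt_atom_vecs A1_atom : atom A1 by apply: atAs; rewrite mem_head.
have /cnt_atom_vecs A2_atom : atom A2 by apply: atAs; rewrite !inE eqxx orbT.
have := allP (allP two_factor_check_ok _ A1_atom) _ A2_atom.
by rewrite -cntB -/(lengths_of 4 (cnt B)) /two_five_ok L5 => /allP.
Qed.

Definition B25 : seq 'Z_6 := [seq inZp i | i <- [:: 1; 1; 1; 1; 2; 5; 5; 5; 5; 5; 5]].
Definition B245 : seq 'Z_6 := [seq inZp i | i <- [:: 1; 1; 1; 1; 2; 4; 5; 5; 5; 5]].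

Lemma B25_system : @in_system_of_lengths 'Z_6 (fun k => k = 2 \/ k = 5).
Proof.
exists B25; split; first by apply/zero_sum_cnt; vm_compute.
move=> k; rewrite in_lengthsP (_ : lengths_of 4 (cnt B25) = [:: 5; 2]); last by vm_compute.
by rewrite !inE; split=> [[]->|/orP[]/eqP->]; auto.
Qed.

Lemma B245_system : @in_system_of_lengths 'Z_6 (fun k => k = 2 \/ k = 4 \/ k = 5).
Proof.
exists B245; split; first by apply/zero_sum_cnt; vm_compute.
move=> k; rewrite in_lengthsP (_ : lengths_of 4 (cnt B245) = [:: 5; 4; 2]); last by vm_compute.
by rewrite !inE; split=> [[|[]]->|/or3P[]/eqP->]; auto.
Qed.

Theorem lemma3p1 :
  (forall L : nat -> Prop,
     @in_system_of_lengths 'Z_6 L -> L 2%N -> L 5%N ->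
     (forall k, L k <-> (k = 2%N \/ k = 5%N)) \/
     (forall k, L k <-> (k = 2%N \/ k = 4%N \/ k = 5%N))) /\
  @in_system_of_lengths 'Z_6 (fun k => k = 2%N \/ k = 5%N) /\
  @in_system_of_lengths 'Z_6 (fun k => k = 2%N \/ k = 4%N \/ k = 5%N) /\
  ~ @in_system_of_lengths 'Z_6 (fun k => (2 <= k <= 5)%N).
Proof.
split; last split; [|exact: B25_system|split; [exact: B245_system|]].
- move=> L [B [_ LB]] /LB L2 /LB L5.
  have LBk k : L k <-> k \in lengths_of 4 (cnt B) := iff_trans (LB k) (in_lengthsP B k).
  have sub245 := lengths_2_5 L2 L5.
  have /in_lengthsP mem2 := L2; have /in_lengthsP mem5 := L5.
  case: (boolP (4 \in lengths_of 4 (cnt B))) => [L4|notL4]; [right|left] => k; rewrite LBk.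
  + by split=> [/sub245|[|[]]->//]; rewrite !inE => /or3P[]/eqP->; auto.
  + split=> [Lk|[]->//]; move: (sub245 _ Lk); rewrite !inE => /or3P[]/eqP k_eq; subst k; auto.
    by rewrite Lk in notL4.
- move=> [B [_ LB]]; have /in_lengthsP L3 := (LB 3).1 isT.
  by have := lengths_2_5 ((LB 2).1 isT) ((LB 5).1 isT) L3.
Qed.
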